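(* Let $G$ and $H$ be connected nontrivial graphs of orders $n_1$ and $n_2$, respectively. If the vertex set of $G_{SR}$ can be partitioned into $\beta(G_{SR})$ cliques, then $$dim_s(G\boxtimes H) = n_2\cdot dim_s(G) + n_1\cdot dim_s(H) - dim_s(G)\cdot dim_s(H).$$
   Context: For a connected graph $G$ with shortest-path distance $d_G$, a vertex $w$ strongly resolves $u,v$ if $d_G(w,u)=d_G(w,v)+d_G(v,u)$ or $d_G(w,v)=d_G(w,u)+d_G(u,v)$; $dim_s(G)$ is the minimum cardinality of a set $S\subseteq V(G)$ such that every pair of vertices is strongly resolved by some vertex of $S$. A vertex $u$ is maximally distant from $v$ if every neighbor $w$ of $u$ satisfies $d_G(v,w)\le d_G(u,v)$; $u,v$ are mutually maximally distant if each is maximally distant from the other. The strong resolving graph $G_{SR}$ has vertex set $V(G)$, with $u,v$ adjacent iff mutually maximally distant in $G$. $\beta$ denotes the independence number; a clique is a set of pairwise adjacent vertices. The strong product $G\boxtimes H$ has vertex set $V(G)\times V(H)$, with $(a,b)\sim(c,d)$ iff ($a=c$ and $bd\in E(H)$) or ($ac\in E(G)$ and $b=d$) or ($ac\in E(G)$ and $bd\in E(H)$). Nontrivial means at least two vertices. *)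

From mathcomp Require Import all_boot.
Set Implicit Arguments. Unset Strict Implicit. Unset Printing Implicit Defensive.

Section Graphs.
Variable T : finType.
Variable e : rel T.

Definition simple_graph := symmetric e /\ irreflexive e.
Definition connected_graph := forall x y : T, connect e x y.

Fixpoint reach (k : nat) (x : T) : {set T} :=
  match k with
  | 0 => [set x]
  | k'.+1 => reach k' x :|: [set z | [exists y in reach k' x, e y z]]
  end.

(* shortest-path distance: least k with y reachable in <= k steps
   (any shortest path has length < #|T|; value #|T| only if unreachable) *)
Definition dist (x y : T) : nat := find (fun k => y \in reach k x) (iota 0 #|T|).

Definition strongly_resolves (w u v : T) : bool :=
  (dist w u == dist w v + dist v u) || (dist w v == dist w u + dist u v).

Definition strong_resolving_set (S : {set T}) : bool :=
  [forall u, forall v, (u != v) ==> [exists w in S, strongly_resolves w u v]].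

Definition sdim : nat :=
  #|[arg min_(S < setT | strong_resolving_set S) #|S|]|.

Definition max_distant (u v : T) : bool :=
  [forall w, e u w ==> (dist v w <= dist u v)].

Definition mutually_max_distant (u v : T) : bool :=
  max_distant u v && max_distant v u.

End Graphs.

Definition strong_resolving_graph (T : finType) (e : rel T) : rel T :=
  fun u v => mutually_max_distant e u v.

Section Sets.
Variable T : finType.
Variable a : rel T.

Definition independent_set (S : {set T}) : bool :=
  [forall u in S, forall v in S, (u != v) ==> ~~ a u v].

Definition clique (S : {set T}) : bool :=
  [forall u in S, forall v in S, (u != v) ==> a u v].

Definition indep_number : nat :=
  #|[arg max_(S > set0 | independent_set S) #|S|]|.

Definition clique_partitionable (k : nat) : Prop :=
  exists P : {set {set T}},
    [/\ partition P [set: T], #|P| = k & forall C, C \in P -> clique C].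
End Sets.

Definition strong_product (T1 T2 : finType) (e1 : rel T1) (e2 : rel T2)
  : rel (T1 * T2) :=
  fun x y =>
    [|| (x.1 == y.1) && e2 x.2 y.2,
        e1 x.1 y.1 && (x.2 == y.2)
      | e1 x.1 y.1 && e2 x.2 y.2].

(* The strong resolving sets of a graph are exactly the vertex covers of its strong
   resolving graph (a vertex strongly resolving two mutually maximally distant vertices
   must be one of them, and every pair is strongly resolved by both ends of a longest
   geodesic through it), so dim_s(G) = n - beta(G_SR).  Distances in G ⊠ H are maxima
   of the coordinate distances; hence a pair of the product whose coordinate pairs are
   each equal or mutually maximally distant is mutually maximally distant, and a mutually
   maximally distant pair of the product is so in the coordinate of larger distance.
   Products of independent sets are then independent in (G ⊠ H)_SR, while an
   independent set of (G ⊠ H)_SR meets the fibre of each clique of G_SR in at most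
   beta(H_SR) vertices; with beta(G_SR) cliques covering G_SR this gives
   beta((G ⊠ H)_SR) = beta(G_SR) * beta(H_SR), and the formula is arithmetic. *)

From mathcomp Require Import all_boot zify.
Set Implicit Arguments. Unset Strict Implicit. Unset Printing Implicit Defensive.

Section IndependentSets.
Variables (T : finType) (a : rel T).

Definition vertex_cover (S : {set T}) :=
  forall u v, u != v -> a u v -> (u \in S) || (v \in S).

Lemma independent_setC S : independent_set a (~: S) <-> vertex_cover S.
Proof.
split=> [/forall_inP indS u v u_v a_uv | coverS].
  apply/negPn/negP; rewrite negb_or => /andP[uS vS].
  have /indS/forall_inP/(_ v) : u \in ~: S by rewrite inE uS.
  by rewrite inE vS u_v a_uv => /(_ isT).
apply/forall_inP => u; rewrite inE => uS; apply/forall_inP => v; rewrite inE => vS.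
apply/implyP => u_v; apply/negP => a_uv.
by have := coverS u v u_v a_uv; rewrite (negbTE uS) (negbTE vS).
Qed.

Lemma independent_set0 : independent_set a set0.
Proof. by apply/forall_inP => u; rewrite inE. Qed.

Lemma indep_number_max I : independent_set a I -> #|I| <= indep_number a.
Proof. by rewrite /indep_number; case: arg_maxnP => [|J _]; [exact: independent_set0 | apply]. Qed.

Lemma indep_numberP : exists2 I, independent_set a I & #|I| = indep_number a.
Proof.
rewrite /indep_number; case: arg_maxnP => [|J indJ _]; first exact: independent_set0.
by exists J.
Qed.

Lemma indep_number_le_card : indep_number a <= #|T|.
Proof. by have [I _ <-] := indep_numberP; apply: max_card. Qed.

Lemma independent_setP I x y :
  independent_set a I -> x \in I -> y \in I -> x != y -> ~~ a x y.
Proof. by move=> /forall_inP indI xI yI; move/forall_inP/(_ y yI)/implyP: (indI x xI). Qed.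

Lemma cliqueP C x y : clique a C -> x \in C -> y \in C -> (x == y) || a x y.
Proof.
move=> /forall_inP clC xC yC; case: eqVneq => //= x_y.
by move/forall_inP/(_ y yC)/implyP: (clC x xC); apply.
Qed.

End IndependentSets.

Section Distance.
Variables (T : finType) (e : rel T).
Hypothesis esym : symmetric e.
Hypothesis econn : connected_graph e.
Local Notation d := (dist e).

Lemma in_reachS k x y :
  (y \in reach e k.+1 x) = (y \in reach e k x) || [exists z in reach e k x, e z y].
Proof. by rewrite /= in_setU inE. Qed.

Lemma subset_reach k m x : k <= m -> reach e k x \subset reach e m x.
Proof.
elim: m => [|m IHm]; first by rewrite leqn0 => /eqP ->.
rewrite leq_eqVlt => /orP[/eqP -> //|/IHm sub_km].
by apply: subset_trans sub_km _; apply/subsetP => y yk; rewrite in_reachS yk.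
Qed.

Lemma last_in_reach x p : path e x p -> last x p \in reach e (size p) x.
Proof.
elim/last_ind: p => [|p z IHp]; first by rewrite /= inE.
rewrite rcons_path last_rcons size_rcons in_reachS => /andP[/IHp p_in e_pz].
by apply/orP; right; apply/existsP; exists (last x p); rewrite p_in.
Qed.

(* A shortest walk repeats no vertex, so it has fewer than #|T| steps. *)
Lemma reach_lt_card x y : exists2 k, k < #|T| & y \in reach e k x.
Proof.
have /connectP[p p_path ->] := econn x y.
have [q q_path q_uniq _] := shortenP p_path.
exists (size q); last exact: last_in_reach.
by have := max_card (mem (x :: q)); move/card_uniqP: q_uniq => ->.
Qed.

Lemma mem_reach k x y : (y \in reach e k x) = (d x y <= k).
Proof.
rewrite /dist; set P := fun k => y \in reach e k x.
have [k0 k0_lt k0_reach] := reach_lt_card x y.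
have hasP : has P (iota 0 #|T|) by apply/hasP; exists k0; rewrite ?mem_iota.
have find_lt : find P (iota 0 #|T|) < #|T| by rewrite -[X in _ < X](size_iota 0) -has_find.
have := nth_find 0 hasP; rewrite nth_iota // add0n => P_find.
apply/idP/idP => [y_reach | /subset_reach/subsetP]; last exact.
rewrite leqNgt; apply/negP => lt_k.
have := before_find 0 lt_k; rewrite nth_iota ?add0n ?/P ?y_reach //.
exact: ltn_trans find_lt.
Qed.

Lemma leq_distS k x y :
  (d x y <= k.+1) = [exists z, (d x z <= k) && ((z == y) || e z y)].
Proof.
rewrite -mem_reach in_reachS mem_reach; apply/orP/existsP.
- case=> [le_k | /existsP[z /andP[z_reach e_zy]]]; first by exists y; rewrite le_k eqxx.
  by exists z; rewrite -mem_reach z_reach e_zy orbT.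
- case=> z /andP[le_k /orP[/eqP <- | e_zy]]; first by left.
  by right; apply/existsP; exists z; rewrite mem_reach le_k.
Qed.

Lemma dist_eq0 x y : (d x y == 0) = (x == y).
Proof. by rewrite -leqn0 -mem_reach inE eq_sym. Qed.

Lemma dist0 x : d x x = 0.
Proof. by apply/eqP; rewrite dist_eq0. Qed.

Lemma dist_edge x y : e x y -> d x y <= 1.
Proof. by move=> e_xy; rewrite leq_distS; apply/existsP; exists x; rewrite dist0 e_xy orbT. Qed.

Lemma dist_triangle x y z : d x z <= d x y + d y z.
Proof.
suff le_k k z' : d y z' <= k -> d x z' <= d x y + k by apply: le_k.
elim: k z' => [|k IHk] z'; first by rewrite leqn0 dist_eq0 addn0 => /eqP <-.
rewrite leq_distS addnS leq_distS => /existsP[w /andP[/IHk le_w w_z]].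
by apply/existsP; exists w; rewrite le_w.
Qed.

Lemma dist_sym x y : d x y = d y x.
Proof.
suff le_k k u v : d v u <= k -> d u v <= k by apply/eqP; rewrite eqn_leq le_k // le_k.
elim: k u v => [|k IHk] u v; first by rewrite !leqn0 !dist_eq0 eq_sym.
rewrite leq_distS => /existsP[w /andP[/IHk le_k w_u]].
apply: leq_trans (dist_triangle u w v) _; rewrite -add1n leq_add //.
by case/orP: w_u => [/eqP -> | e_wu]; [rewrite dist0 | apply: dist_edge; rewrite esym].
Qed.

Lemma dist_predecessor k x y : d x y = k.+1 -> exists2 z, e z y & d x z = k.
Proof.
move=> dxy; have := leqnn (d x y); rewrite [X in _ <= X]dxy leq_distS.
case/existsP=> z /andP[le_k /orP[/eqP z_y | e_zy]]; first by move: le_k; rewrite z_y dxy ltnn.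
exists z => //; apply/eqP; rewrite eqn_leq le_k /=.
by have := dist_triangle x z y; have := dist_edge e_zy; lia.
Qed.

Lemma dist_nbr_le x y z : e x y -> d z y <= d z x + 1.
Proof. by move=> e_xy; apply: leq_trans (dist_triangle z x y) _; rewrite leq_add2l dist_edge. Qed.

Lemma max_distant_off_geodesic w u v :
  max_distant e v u -> w != v -> d w u < d w v + d v u.
Proof.
move=> /forallP v_max w_v; case dwv: (d w v) => [|k].
  by move/eqP: dwv; rewrite dist_eq0 (negbTE w_v).
have [v' e_v'v dwv'] := dist_predecessor dwv.
have := implyP (v_max v'); rewrite esym e_v'v => /(_ isT) le_v'.
by have := dist_triangle w v' u; rewrite (dist_sym v' u); lia.
Qed.

Lemma dist_closed_nbr_le x x' y M : (x == x') || e x x' ->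
  (x == y) || max_distant e x y -> d x y <= M -> 0 < M -> d y x' <= M.
Proof.
case/orP=> [/eqP <- | e_xx'] x_y le_M M_gt0; first by rewrite dist_sym.
case/orP: x_y => [/eqP <- | /forallP/(_ x')]; first exact: leq_trans (dist_edge e_xx') M_gt0.
by rewrite e_xx' => /leq_trans; apply.
Qed.

(* Extending a geodesic through u and v as far as possible ends in a vertex that is
   maximally distant from the other end. *)
Lemma max_distant_geodesic_end x y u v :
  d x y = d x u + d u v + d v y ->
  (forall z, d z y = d z u + d u v + d v y -> d z y <= d x y) ->
  max_distant e x y.
Proof.
move=> geo_xy x_ext; apply/forallP => z; apply/implyP => e_xz.
rewrite leqNgt (dist_sym y z); apply/negP => lt_z.
have := dist_triangle z u y; have := dist_triangle u v y.
have := dist_nbr_le y e_xz; have := dist_nbr_le u e_xz.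
rewrite (dist_sym y z) (dist_sym y x) (dist_sym u z) (dist_sym u x) => t1 t2 t3 t4.
have geo_zy : d z y = d z u + d u v + d v y by lia.
by have := x_ext z geo_zy; lia.
Qed.

Lemma geodesic_prefix x y u v :
  d x y = d x u + d u v + d v y -> d x v = d x u + d u v.
Proof.
move=> geo_xy; apply/eqP; rewrite eqn_leq dist_triangle /=.
by have := dist_triangle x v y; lia.
Qed.

Lemma strongly_resolves_mutually_max_distant w u v :
  mutually_max_distant e u v -> strongly_resolves e w u v -> (w == u) || (w == v).
Proof.
case/andP=> u_max v_max; case/orP=> /eqP geo.
  case: (eqVneq w v) => [_ | w_v]; first by rewrite orbT.
  by have := max_distant_off_geodesic v_max w_v; rewrite geo ltnn.
case: (eqVneq w u) => [// | w_u].
by have := max_distant_off_geodesic u_max w_u; rewrite geo ltnn.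
Qed.

(* Take a longest geodesic running through u and then v. *)
Lemma exists_mutually_max_distant_resolvers u v : u != v ->
  exists x y, [/\ x != y, mutually_max_distant e x y,
                  strongly_resolves e x u v & strongly_resolves e y u v].
Proof.
move=> u_v; pose geo (p : T * T) := d p.1 p.2 == d p.1 u + d u v + d v p.2.
have geo_uv : geo (u, v) by rewrite /geo /= !dist0 addn0.
have [[x y] /eqP /= geo_xy xy_ext] := arg_maxnP (fun p => d p.1 p.2) geo_uv.
have geo_yx : d y x = d y v + d v u + d u x.
  by rewrite !(dist_sym y) !(dist_sym v u) (dist_sym u x); lia.
have x_max : max_distant e x y.
  apply: max_distant_geodesic_end geo_xy _ => z geo_zy.
  exact: (xy_ext (z, y)) (introT eqP geo_zy).
have y_max : max_distant e y x.
  apply: max_distant_geodesic_end geo_yx _ => z geo_zx.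
  rewrite (dist_sym z) (dist_sym y x); apply: (xy_ext (x, z)); apply/eqP.
  by rewrite /= (dist_sym x) geo_zx (dist_sym u x) (dist_sym z v) (dist_sym v u); lia.
exists x, y; split.
- apply: contraNneq u_v => eq_xy; move: geo_xy; rewrite eq_xy dist0 -dist_eq0; lia.
- exact/andP.
- by rewrite /strongly_resolves (geodesic_prefix geo_xy) eqxx orbT.
- by rewrite /strongly_resolves (geodesic_prefix geo_yx) eqxx.
Qed.

Lemma strong_resolving_setP S :
  strong_resolving_set e S <-> vertex_cover (strong_resolving_graph e) S.
Proof.
split=> [/forallP resS u v u_v mmd_uv | coverS].
  have /forallP/(_ v) := resS u; rewrite u_v => /existsP[w /andP[wS res_w]].
  by case/orP: (strongly_resolves_mutually_max_distant mmd_uv res_w) => /eqP <-;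
    rewrite wS ?orbT.
apply/forallP => u; apply/forallP => v; apply/implyP => u_v.
have [x [y [x_y mmd_xy res_x res_y]]] := exists_mutually_max_distant_resolvers u_v.
by case/orP: (coverS x y x_y mmd_xy) => [xS | yS]; apply/existsP;
  [exists x; rewrite xS | exists y; rewrite yS].
Qed.

End Distance.

Lemma sdim_indep_number (T : finType) (e : rel T) : symmetric e -> connected_graph e ->
  sdim e = #|T| - indep_number (strong_resolving_graph e).
Proof.
move=> esym econn.
have resolvingC S : strong_resolving_set e S <->
    independent_set (strong_resolving_graph e) (~: S).
  by rewrite strong_resolving_setP // independent_setC.
rewrite /sdim; case: arg_minnP => [|S resS S_min].
  by apply/resolvingC; rewrite setCT; apply: independent_set0.
have [I indI cardI] := indep_numberP (strong_resolving_graph e).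
have le_SC : #|~: S| <= #|I| by rewrite cardI; apply: indep_number_max; apply/resolvingC.
have le_S : #|S| <= #|~: I| by apply: S_min; apply/resolvingC; rewrite setCK.
by rewrite -cardI; have := cardsC S; have := cardsC I; lia.
Qed.

Lemma connect_homo (A B : finType) (ea : rel A) (eb : rel B) (f : A -> B) :
  {homo f : x y / ea x y >-> eb x y} -> {homo f : x y / connect ea x y >-> connect eb x y}.
Proof.
move=> f_homo x _ /connectP[p p_path ->]; apply/connectP.
by exists (map f p); [exact: homo_path p_path | rewrite last_map].
Qed.

Lemma card_bigcup_le (T I : finType) (J : {set I}) (A : I -> {set T}) :
  #|\bigcup_(i in J) A i| <= \sum_(i in J) #|A i|.
Proof.
elim/big_rec2: _ => [|i B n _ le_Bn]; first by rewrite cards0.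
by apply: leq_trans (leq_card_setU _ _).1 _; rewrite leq_add2l.
Qed.

Section StrongProduct.
Variables (T1 T2 : finType) (e1 : rel T1) (e2 : rel T2).
Hypotheses (s1 : symmetric e1) (s2 : symmetric e2).
Hypotheses (c1 : connected_graph e1) (c2 : connected_graph e2).
Local Notation P := (strong_product e1 e2).
Local Notation d1 := (dist e1).
Local Notation d2 := (dist e2).
Local Notation dP := (dist P).

Lemma strong_product_sym : symmetric P.
Proof. by move=> x y; rewrite /strong_product s1 s2 (eq_sym x.1) (eq_sym x.2). Qed.

Lemma strong_product_connected : connected_graph P.
Proof.
move=> [a b] [c d]; apply: (@connect_trans _ _ (c, b)).
  apply: (connect_homo (f := pair^~ b)) (c1 a c) => u v e_uv.
  by rewrite /strong_product /= e_uv eqxx orbT.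
apply: (connect_homo (f := pair c)) (c2 b d) => u v e_uv.
by rewrite /strong_product /= e_uv eqxx.
Qed.

Lemma strong_product_closed_nbr x y : (x == y) || P x y =
  ((x.1 == y.1) || e1 x.1 y.1) && ((x.2 == y.2) || e2 x.2 y.2).
Proof.
case: x y => [a b] [c d]; rewrite /strong_product xpair_eqE /=.
by case: (a == c); case: (b == d); case: (e1 a c); case: (e2 b d).
Qed.

Lemma leq_dist_strong_product k x y :
  (dP x y <= k) = (d1 x.1 y.1 <= k) && (d2 x.2 y.2 <= k).
Proof.
have cP := strong_product_connected.
elim: k y => [|k IHk] y.
  by rewrite !leqn0 (dist_eq0 cP) (dist_eq0 c1) (dist_eq0 c2); case: x y => [a b] [c d].
rewrite (leq_distS cP) (leq_distS c1) (leq_distS c2); apply/existsP/andP.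
  case=> z; rewrite IHk strong_product_closed_nbr => /andP[/andP[le1 le2] /andP[z1 z2]].
  by split; apply/existsP; [exists z.1 | exists z.2]; rewrite ?le1 ?le2.
case=> /existsP[z1 /andP[le1 nbr1]] /existsP[z2 /andP[le2 nbr2]].
by exists (z1, z2); rewrite IHk strong_product_closed_nbr /= le1 le2 nbr1 nbr2.
Qed.

Lemma dist_strong_product x y : dP x y = maxn (d1 x.1 y.1) (d2 x.2 y.2).
Proof.
apply/eqP; rewrite eqn_leq leq_dist_strong_product leq_maxl leq_maxr /= geq_max.
by rewrite -leq_dist_strong_product leqnn.
Qed.

Lemma mutually_max_distant_strong_product_l x y :
  mutually_max_distant P x y -> d2 x.2 y.2 <= d1 x.1 y.1 ->
  mutually_max_distant e1 x.1 y.1.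
Proof.
have max_l u v : max_distant P u v -> d2 u.2 v.2 <= d1 u.1 v.1 -> max_distant e1 u.1 v.1.
  move=> /forallP u_max le_uv; apply/forallP => w; apply/implyP => e_uw.
  have e_P : P u (w, u.2) by rewrite /strong_product /= e_uw eqxx orbT.
  by have := implyP (u_max _) e_P; rewrite !dist_strong_product /=; lia.
case/andP=> x_max y_max le_xy; rewrite /mutually_max_distant max_l //=.
by apply: max_l; rewrite // (dist_sym s1 c1) (dist_sym s2 c2).
Qed.

Lemma mutually_max_distant_strong_product_r x y :
  mutually_max_distant P x y -> d1 x.1 y.1 <= d2 x.2 y.2 ->
  mutually_max_distant e2 x.2 y.2.
Proof.
have max_r u v : max_distant P u v -> d1 u.1 v.1 <= d2 u.2 v.2 -> max_distant e2 u.2 v.2.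
  move=> /forallP u_max le_uv; apply/forallP => w; apply/implyP => e_uw.
  have e_P : P u (u.1, w) by rewrite /strong_product /= e_uw eqxx.
  by have := implyP (u_max _) e_P; rewrite !dist_strong_product /=; lia.
case/andP=> x_max y_max le_xy; rewrite /mutually_max_distant max_r //=.
by apply: max_r; rewrite // (dist_sym s1 c1) (dist_sym s2 c2).
Qed.

Lemma mutually_max_distant_strong_product x y : x != y ->
  (x.1 == y.1) || mutually_max_distant e1 x.1 y.1 ->
  (x.2 == y.2) || mutually_max_distant e2 x.2 y.2 ->
  mutually_max_distant P x y.
Proof.
have max_P u v : u != v -> (u.1 == v.1) || max_distant e1 u.1 v.1 ->
    (u.2 == v.2) || max_distant e2 u.2 v.2 -> max_distant P u v.
  move=> u_v max1 max2; apply/forallP => w; apply/implyP => e_uw.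
  have /andP[nbr1 nbr2] : ((u.1 == w.1) || e1 u.1 w.1) && ((u.2 == w.2) || e2 u.2 w.2).
    by rewrite -strong_product_closed_nbr e_uw orbT.
  have dP_gt0 : 0 < dP u v by rewrite lt0n (dist_eq0 strong_product_connected).
  rewrite dist_strong_product in dP_gt0; rewrite !dist_strong_product geq_max.
  rewrite (dist_closed_nbr_le s1 c1 nbr1 max1 (leq_maxl _ _) dP_gt0).
  exact: (dist_closed_nbr_le s2 c2 nbr2 max2 (leq_maxr _ _) dP_gt0).
move=> x_y mmd1 mmd2.
have [max1 max1'] : ((x.1 == y.1) || max_distant e1 x.1 y.1) /\
    ((y.1 == x.1) || max_distant e1 y.1 x.1).
  by case/orP: mmd1 => [/eqP -> | /andP[-> ->]]; rewrite ?eqxx ?orbT.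
have [max2 max2'] : ((x.2 == y.2) || max_distant e2 x.2 y.2) /\
    ((y.2 == x.2) || max_distant e2 y.2 x.2).
  by case/orP: mmd2 => [/eqP -> | /andP[-> ->]]; rewrite ?eqxx ?orbT.
by apply/andP; split; apply: max_P; rewrite // eq_sym.
Qed.

Local Notation SR1 := (strong_resolving_graph e1).
Local Notation SR2 := (strong_resolving_graph e2).
Local Notation SRP := (strong_resolving_graph P).

Lemma independent_setX I1 I2 : independent_set SR1 I1 -> independent_set SR2 I2 ->
  independent_set SRP (setX I1 I2).
Proof.
move=> ind1 ind2; apply/forall_inP => -[a b] /setXP[aI bI].
apply/forall_inP => -[c d] /setXP[cI dI]; apply/implyP => neq; apply/negP => mmd.
have [le21 | /ltnW le12] := leqP (d2 b d) (d1 a c).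
  have [eq_ac | ne_ac] := eqVneq a c.
    move: le21 neq; rewrite eq_ac (dist0 c1) leqn0 (dist_eq0 c2) => /eqP ->.
    by rewrite eqxx.
  case/negP: (independent_setP ind1 aI cI ne_ac).
  exact: mutually_max_distant_strong_product_l mmd le21.
have [eq_bd | ne_bd] := eqVneq b d.
  move: le12 neq; rewrite eq_bd (dist0 c2) leqn0 (dist_eq0 c1) => /eqP ->.
  by rewrite eqxx.
case/negP: (independent_setP ind2 bI dI ne_bd).
exact: mutually_max_distant_strong_product_r mmd le12.
Qed.

Lemma indep_number_strong_product_ge :
  indep_number SR1 * indep_number SR2 <= indep_number SRP.
Proof.
have [I1 ind1 <-] := indep_numberP SR1; have [I2 ind2 <-] := indep_numberP SR2.
by rewrite -cardsX; apply/indep_number_max/independent_setX.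
Qed.

(* The vertices of C are pairwise equal or mutually maximally distant, so on the fibre
   of C the second projection is injective with an independent image. *)
Lemma card_independent_clique_fibre S C : independent_set SRP S -> clique SR1 C ->
  #|S :&: setX C setT| <= indep_number SR2.
Proof.
move=> indS clC.
have mmd_fibre x y : x \in S :&: setX C setT -> y \in S :&: setX C setT ->
    (x.2 == y.2) || SR2 x.2 y.2 -> x = y.
  rewrite !inE !andbT => /andP[xS xC] /andP[yS yC] mmd2; apply/eqP/negPn/negP => x_y.
  case/negP: (independent_setP indS xS yS x_y).
  by apply: mutually_max_distant_strong_product => //; apply: cliqueP clC xC yC.
have snd_inj : {in S :&: setX C setT &, injective snd}.
  by move=> x y xS yS eq2; apply: mmd_fibre; rewrite ?eq2 ?eqxx.
rewrite -(card_in_imset snd_inj); apply: indep_number_max.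
apply/forall_inP => _ /imsetP[x xS ->]; apply/forall_inP => _ /imsetP[y yS ->].
apply/implyP => x_y; apply/negP => mmd2.
by move: x_y; rewrite (mmd_fibre x y xS yS) ?mmd2 ?orbT ?eqxx.
Qed.

Lemma indep_number_strong_product_le :
  clique_partitionable SR1 (indep_number SR1) ->
  indep_number SRP <= indep_number SR1 * indep_number SR2.
Proof.
case=> Pt [Pt_part <- Pt_cliques].
have [S indS <-] := indep_numberP SRP.
have S_cover : S \subset \bigcup_(C in Pt) (S :&: setX C setT).
  apply/subsetP => x xS; have : x.1 \in cover Pt by rewrite (cover_partition Pt_part) inE.
  by case/bigcupP=> C CPt x1C; apply/bigcupP; exists C; rewrite // !inE xS x1C.
apply: leq_trans (subset_leq_card S_cover) _; apply: leq_trans (card_bigcup_le _ _) _.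
rewrite -sum_nat_const; apply: leq_sum => C CPt.
exact: card_independent_clique_fibre indS (Pt_cliques C CPt).
Qed.

End StrongProduct.

Lemma subn_mul_complement n1 n2 b1 b2 : b1 <= n1 -> b2 <= n2 ->
  n1 * n2 - b1 * b2 = n2 * (n1 - b1) + n1 * (n2 - b2) - (n1 - b1) * (n2 - b2).
Proof.
move=> /subnK <- /subnK <-; rewrite !addnK.
by move: (n1 - b1) (n2 - b2) => k1 k2; lia.
Qed.

Theorem theorem15 (T1 T2 : finType) (e1 : rel T1) (e2 : rel T2) :
  simple_graph e1 -> simple_graph e2 ->
  connected_graph e1 -> connected_graph e2 ->
  1 < #|T1| -> 1 < #|T2| ->
  clique_partitionable (strong_resolving_graph e1)
    (indep_number (strong_resolving_graph e1)) ->
  sdim (strong_product e1 e2) =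
    #|T2| * sdim e1 + #|T1| * sdim e2 - sdim e1 * sdim e2.
Proof.
move=> [s1 _] [s2 _] c1 c2 _ _ partSR1.
have betaP : indep_number (strong_resolving_graph (strong_product e1 e2)) =
    indep_number (strong_resolving_graph e1) * indep_number (strong_resolving_graph e2).
  apply/eqP; rewrite eqn_leq indep_number_strong_product_le //.
  exact: indep_number_strong_product_ge.
have sP := strong_product_sym s1 s2; have cP := strong_product_connected c1 c2.
rewrite !sdim_indep_number // betaP card_prod.
by apply: subn_mul_complement; apply: indep_number_le_card.
Qed.
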